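(* Fix integers $k \ge 1$ and $n \ge 1$. For every database $D$ of $n$ rows and every neighboring database $D'$ (as defined in the context), $|\mathrm{SSE}(D) - \mathrm{SSE}(D')| \le 7$. That is, the sensitivity of $\mathrm{SSE}$ is at most $7$.
   Context: A database $D$ consists of $n$ rows. Each row is a pair $(g, y)$ with group label $g \in \{1,\dots,k\}$ and response value $y \in [0,1]$; the number of groups $k$ is fixed. For group $i$ let $n_i$ be the number of rows with label $i$, so $\sum_i n_i = n$. Let $y_{i1},\dots,y_{in_i}$ be the responses in group $i$ and $\overline{y}_i = \frac{1}{n_i}\sum_j y_{ij}$ be the group mean; an empty group contributes nothing to any sum. Define $\mathrm{SSE}(D) = \sum_{i=1}^k \sum_{j=1}^{n_i} (y_{ij} - \overline{y}_i)^2$. Two databases $D, D'$ with $n$ rows each are neighboring if they differ in exactly one row; the changed row may have a different group label and/or a different response value. The sensitivity of a real-valued function $f$ on databases is $\max |f(D) - f(D')|$, taken over all neighboring pairs $D, D'$. *)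

From HB Require Import structures.
From mathcomp Require Import all_boot all_order all_algebra.
Set Implicit Arguments. Unset Strict Implicit. Unset Printing Implicit Defensive.
Import Order.TTheory GRing.Theory Num.Theory.
Local Open Scope ring_scope.

(* A database of n rows: row j has group label (D j).1 : 'I_k (labels 0..k-1
   stand for 1..k) and response (D j).2. *)
Definition database (R : realFieldType) (k n : nat) := 'I_n -> 'I_k * R.

Definition valid_db (R : realFieldType) (k n : nat) (D : database R k n) : Prop :=
  forall j : 'I_n, 0 <= (D j).2 <= 1.

Definition group_size (R : realFieldType) (k n : nat) (D : database R k n)
  (i : 'I_k) : nat := #|[set j : 'I_n | (D j).1 == i]|.

(* group mean (only used when n_i > 0; empty groups have no rows to sum over) *)
Definition group_mean (R : realFieldType) (k n : nat) (D : database R k n)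
  (i : 'I_k) : R :=
  (\sum_(j : 'I_n | (D j).1 == i) (D j).2) / (group_size D i)%:R.

Definition SSE (R : realFieldType) (k n : nat) (D : database R k n) : R :=
  \sum_(i : 'I_k) \sum_(j : 'I_n | (D j).1 == i) ((D j).2 - group_mean D i) ^+ 2.

Definition neighboring (R : realFieldType) (k n : nat) (D D' : database R k n) : Prop :=
  exists j0 : 'I_n, D j0 <> D' j0 /\ forall j : 'I_n, j <> j0 -> D j = D' j.

From HB Require Import structures.
From mathcomp Require Import all_boot all_order all_algebra.
From mathcomp Require Import ring lra.
Import Order.TTheory GRing.Theory Num.Theory.
Local Open Scope ring_scope.

Set Implicit Arguments. Unset Strict Implicit.

(* In fact the sensitivity is at most 1. The mean of a group minimises the sum
   of squared deviations, so the contribution of group i to SSE(D) is at most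
   the sum of squared deviations of the rows of D in group i about the mean m'
   of group i in D'. That sum agrees with the contribution of group i to
   SSE(D') except for the changed row, which adds a term (y - m')^2 <= 1 since
   y and m' lie in [0,1]; it does so in a single group only. Hence
   SSE(D) <= SSE(D') + 1, and symmetrically. *)

Section SumOfSquares.
Variables (R : realFieldType) (I : finType).

Lemma sum_sqr_dev_mean_min (P : pred I) (y : I -> R) (c : R) :
  \sum_(j | P j) (y j - (\sum_(j | P j) y j) / #|[set j | P j]|%:R) ^+ 2
  <= \sum_(j | P j) (y j - c) ^+ 2.
Proof.
set s := \sum_(j | P j) y j; set N : R := #|[set j | P j]|%:R; set m := s / N.
have sum_const_N : \sum_(j | P j) (c + m) = N * (c + m).
  by rewrite sumr_const /N cardsE mulr_natl.
rewrite -subr_ge0 -sumrB.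
have -> : \sum_(j | P j) ((y j - c) ^+ 2 - (y j - m) ^+ 2)
    = (m - c) * (2 * s - N * (c + m)).
  rewrite (eq_bigr (fun j => (m - c) * (2 * y j - (c + m)))) => [|j _]; last by ring.
  by rewrite -mulr_sumr sumrB -mulr_sumr sum_const_N.
have [N0|N_neq0] := eqVneq N 0.
  have -> : s = 0.
    rewrite /s big_pred0 // => j; apply/negbTE/negP => Pj.
    by move/eqP: N0; rewrite /N pnatr_eq0 cards_eq0 => /eqP/setP/(_ j); rewrite !inE Pj.
  by rewrite /m N0 invr0 !(mul0r, mulr0, subr0).
have -> : s = N * m by rewrite /m mulrC divfK.
have -> : (m - c) * (2 * (N * m) - N * (c + m)) = N * (m - c) ^+ 2 by ring.
by rewrite mulr_ge0 ?ler0n ?sqr_ge0.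
Qed.

Lemma mean_in01 (P : pred I) (y : I -> R) :
  (forall j, P j -> 0 <= y j <= 1) ->
  0 <= (\sum_(j | P j) y j) / #|[set j | P j]|%:R <= 1.
Proof.
move=> y01; have [N0|N_neq0] := eqVneq (#|[set j | P j]|%:R : R) 0.
  by rewrite N0 invr0 mulr0 lexx ler01.
have N_gt0 : 0 < #|[set j | P j]|%:R :> R by rewrite lt0r N_neq0 ler0n.
rewrite divr_ge0 ?ler0n ?sumr_ge0 //=; last by move=> j /y01 /andP[].
rewrite ler_pdivrMr // mul1r cardsE -sumr_const.
by apply: ler_sum => j /y01 /andP[].
Qed.

Lemma big_split_at (P : pred I) (f : I -> R) (j0 : I) :
  \sum_(j | P j) f j
  = \sum_(j | (j != j0) && P j) f j + (if P j0 then f j0 else 0).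
Proof. by rewrite big_mkcond (bigD1 j0) //= addrC big_mkcondr. Qed.

End SumOfSquares.

Definition group_sse (R : realFieldType) (k n : nat) (D : database R k n)
  (i : 'I_k) : R :=
  \sum_(j : 'I_n | (D j).1 == i) ((D j).2 - group_mean D i) ^+ 2.

Lemma neighboring_sym (R : realFieldType) (k n : nat) (D D' : database R k n) :
  neighboring D D' -> neighboring D' D.
Proof.
by case=> j0 [neq eq_off]; exists j0; split=> [E|j /eq_off]; [apply: neq|].
Qed.

Section Neighbors.
Variables (R : realFieldType) (k n : nat) (D D' : database R k n) (j0 : 'I_n).
Hypotheses (vD : valid_db D) (vD' : valid_db D').
Hypothesis eq_off_j0 : forall j, j <> j0 -> D j = D' j.

Lemma group_sse_le_neighbor (i : 'I_k) :
  group_sse D i <= group_sse D' i + (if (D j0).1 == i then 1 else 0).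
Proof.
set m' := group_mean D' i.
have m'01 : 0 <= m' <= 1 by apply: mean_in01 => j _; apply: vD'.
apply: le_trans (sum_sqr_dev_mean_min _ _ m') _.
rewrite (big_split_at _ _ j0) [group_sse D' i](big_split_at _ _ j0).
have -> : \sum_(j | (j != j0) && ((D j).1 == i)) ((D j).2 - m') ^+ 2
        = \sum_(j | (j != j0) && ((D' j).1 == i)) ((D' j).2 - m') ^+ 2.
  apply: eq_big => [j|j /andP[/eqP j_neq _]]; last by rewrite eq_off_j0.
  by case: eqVneq => [//|/eqP j_neq]; rewrite eq_off_j0.
have D'_term_ge0 : 0 <= if (D' j0).1 == i then ((D' j0).2 - m') ^+ 2 else 0.
  by case: ifP; rewrite ?sqr_ge0.
rewrite -addrA lerD2l; case: ifP => _; last by rewrite addr0.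
have /andP[y0 y1] := vD j0; case/andP: m'01 => m0 m1.
have : ((D j0).2 - m') ^+ 2 <= 1 by nra.
by move/le_trans; apply; rewrite lerDr.
Qed.

Lemma SSE_le_neighbor : SSE D <= SSE D' + 1.
Proof.
apply: le_trans (ler_sum _ (fun i _ => group_sse_le_neighbor i)) _.
by rewrite big_split /= lerD2l -big_mkcond (big_pred1 (D j0).1).
Qed.

End Neighbors.

Theorem mainTheorem1 (R : realFieldType) (k n : nat) (hk : (1 <= k)%N) (hn : (1 <= n)%N)
  (D D' : database R k n) :
  valid_db D -> valid_db D' -> neighboring D D' ->
  `|SSE D - SSE D'| <= 7.
Proof.
move=> vD vD' nb.
have [j0 [_ eq_off]] := nb.
have [j0' [_ eq_off']] := neighboring_sym nb.
have le_DD' := SSE_le_neighbor vD vD' eq_off.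
have le_D'D := SSE_le_neighbor vD' vD eq_off'.
rewrite ler_norml; apply/andP; split; lra.
Qed.
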